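(* Let $H$ be a graph without isolated vertices, let $x$ and $y$ be adjacent vertices of degree 2 in $H$, and let $x'$ and $y'$ be the vertices such that $N_H(x)\setminus\{y\}=\{x'\}$ and $N_H(y)\setminus\{x\}=\{y'\}$. If the sets $N_H(x')\setminus\{x,y\}$ and $N_H(y')\setminus\{x,y\}$ are nonempty, then the 2-subdivision graph $S_2(H)$ is a DPDP-graph but not a minimal DPDP-graph.
   Context: Graphs are finite and may have multiple edges and loops. A leaf is a vertex of degree one. A set $D\subseteq V(G)$ is dominating if every vertex outside $D$ has a neighbor in $D$; $P$ is paired-dominating if it is dominating and the subgraph induced by $P$ has a perfect matching. A DPDP-graph is a graph $G$ admitting disjoint sets $D,P$ with $V(G)=D\cup P$, $D$ dominating and $P$ paired-dominating; a minimal DPDP-graph is a DPDP-graph no proper spanning subgraph of which is a DPDP-graph. 2-subdivision graph: for a graph $H$ with no isolated vertex, set of leaves $L_H$, and $\alpha:L_H\to\mathbb{N}=\{1,2,\dots\}$, $S_2(H)$ has vertex set $(V_H\setminus L_H)\cup\{(v,i): v\in L_H, 1\le i\le \alpha(v)\}$ together with two new vertices for each edge $e$ of $H$ ($u_e,v_e$ if $e$ joins $u\ne v$; $v_e^1,v_e^2$ if $e$ is a loop at $v$). Its edges are: the edge joining the two new vertices of each $e$; for $v\in V_H\setminus L_H$, $vv_e$ for each non-loop edge $e$ at $v$ and $vv_e^1,vv_e^2$ for each loop $e$ at $v$; for $v\in L_H$ with incident edge $e$, the edges $v_e(v,i)$, $1\le i\le\alpha(v)$. The claim holds for any choice of $\alpha$.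 *)

From HB Require Import structures.
From mathcomp Require Import all_boot.
Set Implicit Arguments.
Unset Strict Implicit.
Unset Printing Implicit Defensive.

Section SimpleGraph.
Variable T : finType.

Definition dominating (g : rel T) (D : {set T}) : Prop :=
  forall v, v \notin D -> exists2 u, u \in D & g v u.

Definition induced_perfect_matching (g : rel T) (P : {set T}) : Prop :=
  exists M : {set {set T}},
    (forall m, m \in M ->
       exists u v, [/\ g u v, u \in P, v \in P & m = [set u; v]]) /\
    (forall v, v \in P -> #|[set m in M | v \in m]| = 1).

Definition paired_dominating (g : rel T) (P : {set T}) : Prop :=
  dominating g P /\ induced_perfect_matching g P.

Definition DPDP (g : rel T) : Prop :=
  exists D P : {set T},
    [/\ [disjoint D & P], D :|: P = setT, dominating g D & paired_dominating g P].

(* minimal: no proper spanning subgraph (a symmetric subrelation missing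
   at least one edge) is a DPDP-graph *)
Definition minimal_DPDP (g : rel T) : Prop :=
  DPDP g /\
  forall g' : rel T, (forall u v, g' u v -> g u v) -> symmetric g' ->
    (exists u v, g u v && ~~ g' u v) -> ~ DPDP g'.
End SimpleGraph.

(* A multigraph H: vertex type V, edge type E, and for each edge e its two
   ends endpt e false, endpt e true (equal for a loop). *)
Section MultiGraph.
Variables (V E : finType) (endpt : E -> bool -> V).

(* degree: number of edge-ends at v (a loop counts twice) *)
Definition mdeg (v : V) : nat := #|[set p : E * bool | endpt p.1 p.2 == v]|.
Definition mleaf (v : V) : bool := mdeg v == 1.
Definition mnbhd (v : V) : {set V} :=
  [set u | [exists p : E * bool, (endpt p.1 p.2 == v) && (endpt p.1 (~~ p.2) == u)]].

Variable alpha : V -> nat.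

(* raw vertices: original vertices, leaf copies (v,i) (i < alpha v),
   and the edge-vertices (e,b) = the new vertex of e next to its end b *)
Definition S2raw : finType := ((V + {v : V & 'I_(alpha v)}) + (E * bool))%type.

Definition inS2 (x : S2raw) : bool :=
  match x with
  | inl (inl v) => ~~ mleaf v
  | inl (inr w) => mleaf (tag w)
  | inr _ => true
  end.

Definition S2adj0 (x y : S2raw) : bool :=
  match x, y with
  | inr (e, b), inr (e', b') => (e == e') && (b != b')
  | inl (inl v), inr (e, b) => endpt e b == v
  | inl (inr w), inr (e, b) => endpt e b == tag w
  | _, _ => false
  end.

Definition S2adj (x y : S2raw) : bool := S2adj0 x y || S2adj0 y x.

Definition S2V : finType := {x : S2raw | inS2 x}.

Definition S2 : rel S2V := fun x y => S2adj (val x) (val y).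
End MultiGraph.
Arguments S2 {V E} endpt alpha : rename.
Arguments S2V {V E} endpt alpha.
Arguments mdeg {V E} endpt v.
Arguments mnbhd {V E} endpt v.
Arguments mleaf {V E} endpt v.

From HB Require Import structures.
From mathcomp Require Import all_boot.
Set Implicit Arguments. Unset Strict Implicit. Unset Printing Implicit Defensive.

(* In S_2(H) the vertices of H (and the copies of its leaves) form a dominating set,
   and the subdivision vertices a paired-dominating one, matched along the middle
   edges of the subdivided edges.  A subdivision vertex is encoded as a dart (e, s),
   the end s of the edge e.  For non-minimality, delete the middle edge of the
   subdivided edge xy: x and y join the paired side, matched with their other
   neighbours b (towards x') and f (towards y'), while opp b, the two middle vertices
   of xy and opp f become dominating.  The extra neighbours of x' and y' outside
   {x, y} keep x' and y' dominated by the paired side, and degree 2 at x and y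
   ensures nothing else is disturbed. *)

Section PairedDomination.
Variable T : finType.
Implicit Types (g : rel T) (D P : {set T}).

Lemma induced_perfect_matching_of_involution g P (f : T -> T) :
  (forall v, v \in P -> [/\ f v \in P, f (f v) = v & g v (f v)]) ->
  induced_perfect_matching g P.
Proof.
move=> fP; exists [set [set v; f v] | v in P]; split.
  by move=> _ /imsetP [v vP ->]; have [fvP _ gvfv] := fP v vP; exists v, (f v).
move=> v vP; apply/eqP/cards1P; exists [set v; f v]; apply/setP => m.
rewrite !inE; apply/andP/eqP => [[/imsetP [u uP ->]] | ->]; last first.
  by rewrite set21; split => //; apply/imsetP; exists v.
have [_ ffu _] := fP u uP.
by rewrite !inE => /orP [/eqP -> | /eqP ->] //; rewrite ffu setUC.
Qed.

Lemma DPDP_compl g D : dominating g D -> paired_dominating g (~: D) -> DPDP g.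
Proof.
move=> domD pdomP; exists D, (~: D); split => //; last by rewrite setUCr.
by rewrite disjoint_subset; apply/subsetP => u; rewrite !inE negbK.
Qed.

Definition del_edge g (a b : T) : rel T :=
  fun u v => g u v && ([set u; v] != [set a; b]).

Lemma del_edge_keep g a b u v :
  g u v -> (u \notin [set a; b]) || (v \notin [set a; b]) -> del_edge g a b u v.
Proof.
move=> guv uv_ab; rewrite /del_edge guv; apply: contraTneq uv_ab => <-.
by rewrite !inE !eqxx orbT.
Qed.

Lemma del_edge_sym g a b : symmetric g -> symmetric (del_edge g a b).
Proof. by move=> gsym u v; rewrite /del_edge gsym setUC. Qed.

Lemma del_edge_not_minimal g a b :
  symmetric g -> g a b -> DPDP (del_edge g a b) -> ~ minimal_DPDP g.
Proof.
move=> gsym gab delDPDP [_ gmin]; apply: (gmin _ _ (del_edge_sym a b gsym) _ delDPDP).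
- by move=> u v /andP [].
- by exists a, b; rewrite /del_edge gab eqxx.
Qed.

End PairedDomination.

Section Darts.
Variables (V E : finType) (endpt : E -> bool -> V).
Implicit Types (p q : E * bool) (v : V).

Definition src p := endpt p.1 p.2.
Definition tgt p := endpt p.1 (~~ p.2).
Definition opp p := (p.1, ~~ p.2).

Lemma oppK : involutive opp.
Proof. by case=> e s; rewrite /opp negbK. Qed.

Lemma opp_neq p : opp p != p.
Proof. by case: p => e s; rewrite /opp xpair_eqE eqxx; case: s. Qed.

Lemma src_opp p : src (opp p) = tgt p.
Proof. by []. Qed.

Lemma tgt_opp p : tgt (opp p) = src p.
Proof. by rewrite /tgt /src /= negbK. Qed.

Lemma mdeg_exists_dart v : 0 < mdeg endpt v -> exists p, src p = v.
Proof. by case/card_gt0P => p; rewrite inE => /eqP; exists p. Qed.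

Lemma mdeg2_darts v p q r : mdeg endpt v = 2 -> p != q ->
  src p = v -> src q = v -> src r = v -> r = p \/ r = q.
Proof.
move=> deg2 neq_pq pv qv rv.
have darts_v : [set s | src s == v] = [set p; q].
  apply/eqP; rewrite eq_sym eqEcard cards2 neq_pq [#|_|]deg2 andbT.
  by apply/subsetP => s; rewrite !inE => /orP [] /eqP ->; rewrite ?pv ?qv.
have : r \in [set s | src s == v] by rewrite inE rv.
by rewrite darts_v !inE => /orP [] /eqP; [left | right].
Qed.

Lemma mnbhdP u v : reflect (exists2 p, src p = v & tgt p = u) (u \in mnbhd endpt v).
Proof.
rewrite inE; apply: (iffP existsP) => [[p /andP [/eqP pv /eqP pu]] | [p pv pu]].
  by exists p.
by exists p; rewrite /src in pv; rewrite /tgt in pu; rewrite pv pu !eqxx.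
Qed.

Lemma mnbhd_diff_dart v (A : {set V}) :
  mnbhd endpt v :\: A != set0 -> exists2 p, src p = v & tgt p \notin A.
Proof.
by case/set0Pn => u /setDP [/mnbhdP [p pv pu] uA]; exists p; rewrite ?pu.
Qed.

End Darts.

Section TwoSubdivision.
Variables (V E : finType) (endpt : E -> bool -> V) (alpha : V -> nat).
Implicit Types (p q : E * bool) (v : V) (u : S2V endpt alpha).

Local Notation S2 := (S2 endpt alpha).
Local Notation src := (src endpt).
Local Notation tgt := (tgt endpt).
Local Notation opp := (@opp E).

Definition dartv p : S2V endpt alpha := exist _ (inr p) isT.
Definition vertexv v (nleaf_v : ~~ mleaf endpt v) : S2V endpt alpha :=
  exist _ (inl (inl v)) nleaf_v.
Definition copyv v (leaf_v : mleaf endpt v) (i : 'I_(alpha v)) : S2V endpt alpha :=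
  exist (inS2 endpt (alpha:=alpha)) (inl (inr (existT _ v i))) leaf_v.

Definition vertex_of u : option V :=
  match sval u with
  | inl (inl v) => Some v
  | inl (inr w) => Some (tag w)
  | inr _ => None
  end.

Variant S2V_spec u : Prop :=
  | S2V_vertex v of vertex_of u = Some v
  | S2V_dart p of u = dartv p.

Lemma S2VP u : S2V_spec u.
Proof.
case: u => [[[v|w]|p] h]; [exact: (S2V_vertex (v := v)) | exact: (S2V_vertex (v := tag w)) |].
by apply: (S2V_dart (p := p)); apply: val_inj.
Qed.

Lemma dartv_inj : injective dartv.
Proof. by move=> p q /(congr1 val) [->]. Qed.

Lemma vertex_of_nonleaf u v (nleaf_v : ~~ mleaf endpt v) :
  vertex_of u = Some v -> u = vertexv nleaf_v.
Proof.
case: u => [[[w|w]|p] h] //= [vw]; first by subst w; apply: val_inj.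
have leaf_v : mleaf endpt v by rewrite -vw.
by exfalso; rewrite leaf_v in nleaf_v.
Qed.

Lemma S2_sym : symmetric S2.
Proof. by move=> u u'; rewrite /S2 /S2adj orbC. Qed.

Lemma S2_dartv p q : S2 (dartv p) (dartv q) = (q == opp p).
Proof.
case: p q => [e s] [e' s']; rewrite /S2 /S2adj /= /opp xpair_eqE eq_sym.
by case: (e' == e); case: s; case: s'.
Qed.

Lemma S2_vertex_dartv u v p : vertex_of u = Some v -> S2 u (dartv p) = (src p == v).
Proof. by case: u => [[[w|w]|q] h] //= [<-]; case: p => e s; rewrite /S2 /S2adj /= orbF. Qed.

Lemma S2_dartv_vertex u v p : vertex_of u = Some v -> S2 (dartv p) u = (src p == v).
Proof. by rewrite S2_sym; apply: S2_vertex_dartv. Qed.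

Section Domination.
Hypothesis deg_gt0 : forall v, 0 < mdeg endpt v.
Hypothesis alpha_gt0 : forall v, mleaf endpt v -> 0 < alpha v.

Lemma vertex_of_onto v : exists u, vertex_of u = Some v.
Proof.
have [leaf_v | nleaf_v] := boolP (mleaf endpt v).
  by exists (copyv leaf_v (Ordinal (alpha_gt0 leaf_v))).
by exists (vertexv nleaf_v).
Qed.

Definition flip_dartv u : S2V endpt alpha :=
  if sval u is inr p then dartv (opp p) else u.

Lemma S2_DPDP : DPDP S2.
Proof.
pose D := [set u | vertex_of u != None].
apply: (DPDP_compl (D := D)); last split.
- move=> u; rewrite inE negbK; case: (S2VP u) => [v -> // | p -> _].
  have [u' u'_src] := vertex_of_onto (src p).
  by exists u'; rewrite ?inE ?u'_src // (S2_dartv_vertex _ u'_src).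
- move=> u; rewrite !inE negbK; case: (S2VP u) => [v uv _ | p ->] //.
  have [p pv] := mdeg_exists_dart (deg_gt0 v).
  by exists (dartv p); rewrite ?inE // (S2_vertex_dartv _ uv) pv.
apply: (induced_perfect_matching_of_involution (f := flip_dartv)) => u.
rewrite !inE; case: (S2VP u) => [v -> | p ->] //= _.
by rewrite /flip_dartv /= oppK S2_dartv.
Qed.

Section EdgeDeletion.
Variables (x y : V) (b c f : E * bool).
Hypotheses (deg_x : mdeg endpt x = 2) (deg_y : mdeg endpt y = 2).
Hypotheses (src_b : src b = x) (src_c : src c = x) (tgt_c : tgt c = y) (src_f : src f = y).
Hypotheses (tgt_b : tgt b != y) (tgt_f : tgt f != x).
Hypotheses (branch_b : exists2 p, src p = tgt b & tgt p \notin [set x; y])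
           (branch_f : exists2 p, src p = tgt f & tgt p \notin [set x; y]).

Lemma darts_at_x p : src p = x -> p = b \/ p = c.
Proof.
move=> px; apply: (mdeg2_darts deg_x _ src_b src_c px).
by apply: contraNneq tgt_b => ->; rewrite tgt_c.
Qed.

Lemma darts_at_y p : src p = y -> p = opp c \/ p = f.
Proof.
move=> py; apply: (mdeg2_darts deg_y _ _ src_f py); last by rewrite src_opp.
by apply: contraNneq tgt_f => <-; rewrite tgt_opp src_c.
Qed.

Lemma x_neq_y : x != y.
Proof.
apply/eqP => xy; have /darts_at_x [cb | cc] : src (opp c) = x by rewrite src_opp tgt_c xy.
  by move: tgt_b; rewrite -cb tgt_opp src_c xy eqxx.
by have := opp_neq c; rewrite cc eqxx.
Qed.

Lemma nonleaf_x : ~~ mleaf endpt x. Proof. by rewrite /mleaf deg_x. Qed.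
Lemma nonleaf_y : ~~ mleaf endpt y. Proof. by rewrite /mleaf deg_y. Qed.

Definition dominating_darts := [:: opp b; c; opp c; opp f].

Lemma dominating_darts_end p :
  p \in dominating_darts -> (src p \in [set x; y]) || (tgt p \in [set x; y]).
Proof.
by rewrite !inE => /or4P [] /eqP ->; rewrite ?src_opp ?tgt_opp ?src_b ?src_c ?tgt_c ?src_f
  !eqxx ?orbT.
Qed.

Lemma dominating_darts_src p :
  p \in dominating_darts -> src p \in [set tgt b; x; y; tgt f].
Proof.
by rewrite !inE => /or4P [] /eqP ->; rewrite ?src_opp ?src_c ?tgt_c !eqxx ?orbT.
Qed.

Lemma avoid_dominating_darts v :
  v \notin [set x; y] -> exists2 p, src p = v & p \notin dominating_darts.
Proof.
have avoid p : src p \notin [set x; y] -> tgt p \notin [set x; y] ->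
    p \notin dominating_darts.
  move=> srcN tgtN; apply/negP => /dominating_darts_end.
  by rewrite (negbTE srcN) (negbTE tgtN).
case: (v =P tgt b) => [-> vN | vb].
  by have [p pv ptgt] := branch_b; exists p; rewrite // avoid ?pv.
case: (v =P tgt f) => [-> vN | vf vN].
  by have [p pv ptgt] := branch_f; exists p; rewrite // avoid ?pv.
have [p pv] := mdeg_exists_dart (deg_gt0 v); exists p => //.
apply/negP => /dominating_darts_src; move: vN.
by rewrite pv !inE (introF eqP vb) (introF eqP vf) /= orbF => /negbTE ->.
Qed.

Lemma b_notin_dominating_darts : b \notin dominating_darts.
Proof.
rewrite !inE; apply/negP; case/or4P => /eqP bE.
- by have := opp_neq b; rewrite -bE eqxx.
- by move: tgt_b; rewrite bE tgt_c eqxx.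
- by move: x_neq_y; rewrite -src_b bE src_opp tgt_c eqxx.
- by move: tgt_b; rewrite bE tgt_opp src_f eqxx.
Qed.

Lemma f_notin_dominating_darts : f \notin dominating_darts.
Proof.
rewrite !inE; apply/negP; case/or4P => /eqP fE.
- by move: tgt_f; rewrite fE tgt_opp src_b eqxx.
- by move: x_neq_y; rewrite -src_f fE src_c eqxx.
- by move: tgt_f; rewrite fE tgt_opp src_c eqxx.
- by have := opp_neq f; rewrite -fE eqxx.
Qed.

Definition S2del := del_edge S2 (dartv c) (dartv (opp c)).

Lemma S2del_sym : symmetric S2del.
Proof. exact: del_edge_sym S2_sym. Qed.

Lemma S2del_vertex_dartv u v p : vertex_of u = Some v -> src p = v -> S2del u (dartv p).
Proof.
move=> uv pv; apply: del_edge_keep; first by rewrite (S2_vertex_dartv _ uv) pv.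
by rewrite !inE; apply/orP; left; apply/norP; split; apply/eqP => uE; move: uv; rewrite uE.
Qed.

Lemma S2del_dartv p : p \notin dominating_darts -> S2del (dartv p) (dartv (opp p)).
Proof.
move=> pN; apply: del_edge_keep; first by rewrite S2_dartv.
rewrite !inE !(inj_eq dartv_inj); apply/orP; left.
by apply: contra pN => /orP [] /eqP ->; rewrite !inE eqxx ?orbT.
Qed.

Definition del_dominating_set : {set S2V endpt alpha} :=
  [set u | if vertex_of u is Some v then v \notin [set x; y]
           else u \in [set dartv p | p in dominating_darts]].

Local Notation D := del_dominating_set.

Lemma mem_D_vertex u v : vertex_of u = Some v -> (u \in D) = (v \notin [set x; y]).
Proof. by move=> uv; rewrite inE uv. Qed.

Lemma mem_D_dartv p : (dartv p \in D) = (p \in dominating_darts).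
Proof. by rewrite inE /= mem_imset //; apply: dartv_inj. Qed.

Local Notation vx := (vertexv nonleaf_x).
Local Notation vy := (vertexv nonleaf_y).

Lemma vx_in_compl_D : vx \in ~: D.
Proof. by rewrite in_setC (mem_D_vertex (erefl : vertex_of vx = Some x)) !inE eqxx. Qed.

Lemma vy_in_compl_D : vy \in ~: D.
Proof. by rewrite in_setC (mem_D_vertex (erefl : vertex_of vy = Some y)) !inE eqxx orbT. Qed.

Lemma compl_D_cases u : u \notin D ->
  [\/ u = vx, u = vy | exists2 p, u = dartv p & p \notin dominating_darts].
Proof.
case: (S2VP u) => [v uv | p ->]; last by rewrite mem_D_dartv => pN; apply: Or33; exists p.
rewrite (mem_D_vertex uv) negbK !inE => /orP [] /eqP vE; move: uv; rewrite vE.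
  by move/(vertex_of_nonleaf nonleaf_x) ->; apply: Or31.
by move/(vertex_of_nonleaf nonleaf_y) ->; apply: Or32.
Qed.

Lemma S2del_dominating_D : dominating S2del D.
Proof.
move=> u /compl_D_cases [-> | -> | [p -> pN]].
- by exists (dartv c); rewrite ?mem_D_dartv ?inE ?eqxx ?orbT // (S2del_vertex_dartv _ src_c).
- exists (dartv (opp c)); first by rewrite mem_D_dartv !inE eqxx !orbT.
  by apply: S2del_vertex_dartv; rewrite ?src_opp.
case: (p =P b) => [-> | pb].
  exists (dartv (opp b)); first by rewrite mem_D_dartv !inE eqxx.
  exact: S2del_dartv b_notin_dominating_darts.
case: (p =P f) => [-> | pf].
  exists (dartv (opp f)); first by rewrite mem_D_dartv !inE eqxx !orbT.
  exact: S2del_dartv f_notin_dominating_darts.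
have pvN : src p \notin [set x; y].
  rewrite !inE; apply/norP; split; apply/eqP.
    by case/darts_at_x => // pc; rewrite pc !inE eqxx orbT in pN.
  by case/darts_at_y => // pc; rewrite pc !inE eqxx !orbT in pN.
have [u' u'v] := vertex_of_onto (src p).
by exists u'; rewrite ?(mem_D_vertex u'v) // S2del_sym (S2del_vertex_dartv u'v).
Qed.

Lemma S2del_dominating_compl_D : dominating S2del (~: D).
Proof.
move=> u; rewrite inE negbK; case: (S2VP u) => [v uv | p ->].
  rewrite (mem_D_vertex uv) => /avoid_dominating_darts [p pv pN].
  by exists (dartv p); rewrite ?in_setC ?mem_D_dartv // (S2del_vertex_dartv uv).
rewrite mem_D_dartv !inE => /or4P [] /eqP ->.
- exists (dartv b); rewrite ?in_setC ?mem_D_dartv ?b_notin_dominating_darts //.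
  by rewrite S2del_sym S2del_dartv ?b_notin_dominating_darts.
- by exists vx; rewrite ?vx_in_compl_D // S2del_sym (S2del_vertex_dartv (v := x)).
- by exists vy; rewrite ?vy_in_compl_D // S2del_sym (S2del_vertex_dartv (v := y)) ?src_opp.
- exists (dartv f); rewrite ?in_setC ?mem_D_dartv ?f_notin_dominating_darts //.
  by rewrite S2del_sym S2del_dartv ?f_notin_dominating_darts.
Qed.

Definition del_partner u : S2V endpt alpha :=
  match sval u with
  | inr p => if p == b then vx else if p == f then vy else dartv (opp p)
  | _ => if vertex_of u == Some x then dartv b else dartv f
  end.

Lemma S2del_matching_compl_D : induced_perfect_matching S2del (~: D).
Proof.
have vxN := vx_in_compl_D; have vyN := vy_in_compl_D.
have bN : dartv b \in ~: D by rewrite in_setC mem_D_dartv b_notin_dominating_darts.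
have fN : dartv f \in ~: D by rewrite in_setC mem_D_dartv f_notin_dominating_darts.
have fb : (f == b) = false.
  by apply/negbTE; apply: contraNneq x_neq_y => fb; rewrite -src_b -fb src_f.
have yx : (Some y == Some x) = false by rewrite (inj_eq Some_inj) eq_sym (negbTE x_neq_y).
apply: (induced_perfect_matching_of_involution (f := del_partner)).
move=> u; rewrite in_setC => /compl_D_cases [-> | -> | [p -> pN]].
- by rewrite /del_partner /= eqxx /= eqxx (S2del_vertex_dartv (v := x)).
- by rewrite /del_partner /= yx /= fb eqxx (S2del_vertex_dartv (v := y)).
rewrite /del_partner /=.
case: (p =P b) => [-> | pb].
  by rewrite /= eqxx S2del_sym (S2del_vertex_dartv (v := x)).
case: (p =P f) => [-> | pf].
  by rewrite /= yx S2del_sym (S2del_vertex_dartv (v := y)).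
have oppN : opp p \notin dominating_darts.
  rewrite !inE; apply/negP; case/or4P => /eqP /(congr1 opp); rewrite !oppK => pE.
  - exact: pb.
  - by rewrite pE !inE eqxx !orbT in pN.
  - by rewrite pE !inE eqxx orbT in pN.
  - exact: pf.
have [opb opf] : opp p != b /\ opp p != f.
  by split; apply: contraNneq pN => /(congr1 opp); rewrite oppK => ->; rewrite !inE eqxx ?orbT.
by rewrite in_setC mem_D_dartv oppN /= (negbTE opb) (negbTE opf) oppK S2del_dartv.
Qed.

Lemma S2del_DPDP : DPDP S2del.
Proof.
exact: DPDP_compl S2del_dominating_D
  (conj S2del_dominating_compl_D S2del_matching_compl_D).
Qed.

End EdgeDeletion.
End Domination.
End TwoSubdivision.

Theorem proposition4p6 (V E : finType) (endpt : E -> bool -> V)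
  (alpha : V -> nat) (x y x' y' : V) :
  (forall v, 0 < mdeg endpt v) ->
  (forall v, mleaf endpt v -> 0 < alpha v) ->
  y \in mnbhd endpt x ->
  mdeg endpt x = 2 -> mdeg endpt y = 2 ->
  mnbhd endpt x :\ y = [set x'] ->
  mnbhd endpt y :\ x = [set y'] ->
  mnbhd endpt x' :\: [set x; y] != set0 ->
  mnbhd endpt y' :\: [set x; y] != set0 ->
  DPDP (S2 endpt alpha) /\ ~ minimal_DPDP (S2 endpt alpha).
Proof.
move=> deg_gt0 alpha_gt0 y_nx deg_x deg_y nx ny x'_branch y'_branch.
split; first exact: S2_DPDP.
have /mnbhdP [c src_c tgt_c] := y_nx.
have /setD1P [x'y /mnbhdP [b src_b tgt_b]] : x' \in mnbhd endpt x :\ y by rewrite nx set11.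
have /setD1P [y'x /mnbhdP [f src_f tgt_f]] : y' \in mnbhd endpt y :\ x by rewrite ny set11.
apply: (del_edge_not_minimal (@S2_sym _ _ endpt alpha) _
  (S2del_DPDP deg_gt0 alpha_gt0 deg_x deg_y src_b src_c tgt_c src_f _ _ _ _)).
- by rewrite S2_dartv.
- by rewrite tgt_b.
- by rewrite tgt_f.
- by rewrite tgt_b; apply: mnbhd_diff_dart.
- by rewrite tgt_f; apply: mnbhd_diff_dart.
Qed.
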